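(* Let $A\in\mathbb{R}^{n\times d}$ and let $k$ be a positive integer. Then $$\sum_{i=1}^{d}\bar\tau_i(A)\le 2k.$$
   Context: $A$ has columns $a_1,\dots,a_d$. $A_k$ denotes a best rank-$k$ approximation of $A$ in Frobenius norm (obtained from a truncated SVD), so $\|A-A_k\|_F^2=\sum_{j>k}\sigma_j(A)^2$. $M^+$ denotes the Moore–Penrose pseudoinverse. The ($k$-)ridge leverage score of the $i$-th column of $A$ is $$\bar\tau_i(A)=a_i^T\Big(AA^T+\tfrac{\|A-A_k\|_F^2}{k}I_n\Big)^+a_i .$$ *)

From HB Require Import structures.
From mathcomp Require Import all_boot all_order all_algebra.
Set Implicit Arguments. Unset Strict Implicit. Unset Printing Implicit Defensive.
Import Order.TTheory GRing.Theory Num.Theory.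
Local Open Scope ring_scope.

Definition frob2 (R : rcfType) (m n : nat) (M : 'M[R]_(m, n)) : R :=
  \sum_(i < m) \sum_(j < n) (M i j) ^+ 2.

Definition best_rank_approx (R : rcfType) (n d k : nat) (A Ak : 'M[R]_(n, d)) : Prop :=
  (\rank Ak <= k)%N /\
  forall B : 'M[R]_(n, d), (\rank B <= k)%N -> frob2 (A - Ak) <= frob2 (A - B).

Definition is_pinv (R : rcfType) (m n : nat) (M : 'M[R]_(m, n)) (P : 'M[R]_(n, m)) : Prop :=
  [/\ M *m P *m M = M, P *m M *m P = P,
      (M *m P)^T = M *m P & (P *m M)^T = P *m M].

Definition ridge_mx (R : rcfType) (n d k : nat) (A Ak : 'M[R]_(n, d)) : 'M[R]_n :=
  A *m A^T + (frob2 (A - Ak) / k%:R)%:M.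

Definition quad_col (R : rcfType) (n d : nat) (A : 'M[R]_(n, d)) (P : 'M[R]_n) (i : 'I_d) : R :=
  ((col i A)^T *m P *m col i A) ord0 ord0.

From HB Require Import structures.
From mathcomp Require Import all_boot all_order all_algebra.
From mathcomp Require Import ring lra.
Set Implicit Arguments. Unset Strict Implicit. Unset Printing Implicit Defensive.
Import Order.TTheory GRing.Theory Num.Theory.
Local Open Scope ring_scope.

(* Write Z = P A and lam = ||A - A_k||_F^2 / k. The Penrose identity P = P M P
   and the symmetry of P give tr(A^T P A) = ||A^T Z||^2 + lam ||Z||^2 =: u + v.
   Split A = A Pi + (A - A_k)(1 - Pi), with Pi the orthogonal projection onto
   the row space of A_k, whose Frobenius norm is sqrt(rank A_k). By
   Cauchy-Schwarz the two parts of tr(A^T Z) are at most sqrt(k u) and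
   ||A - A_k||_F ||Z|| = sqrt(k v), so (u + v)^2 <= 2k (u + v), i.e.
   u + v <= 2k. *)

Lemma split_sum_le_double (R : realFieldType) (a b u v K : R) :
  0 <= K -> a ^+ 2 <= K * u -> b ^+ 2 <= K * v -> a + b = u + v ->
  u + v <= 2 * K.
Proof.
move=> K_ge0 a_le b_le abE.
have : (u + v) ^+ 2 <= 2 * K * (u + v).
  by rewrite -{1}abE; have := sqr_ge0 (a - b); lra.
nra.
Qed.

Section FrobeniusDot.
Variable R : realFieldType.

Definition mxdot m n (X Y : 'M[R]_(m, n)) : R := \tr (X^T *m Y).

Lemma mxdotE m n (X Y : 'M[R]_(m, n)) :
  mxdot X Y = \sum_(j < n) \sum_(i < m) X i j * Y i j.
Proof.
by apply: eq_bigr => j _; rewrite mxE; apply: eq_bigr => i _; rewrite mxE.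
Qed.

Lemma mxdotC m n (X Y : 'M[R]_(m, n)) : mxdot X Y = mxdot Y X.
Proof. by rewrite /mxdot -mxtrace_tr trmx_mul trmxK. Qed.

Lemma mxdotDr m n (X Y Z : 'M[R]_(m, n)) : mxdot X (Y + Z) = mxdot X Y + mxdot X Z.
Proof. by rewrite /mxdot mulmxDr mxtraceD. Qed.

Lemma mxdotNr m n (X Y : 'M[R]_(m, n)) : mxdot X (- Y) = - mxdot X Y.
Proof. by rewrite /mxdot mulmxN linearN. Qed.

Lemma mxdotZr m n (X Y : 'M[R]_(m, n)) a : mxdot X (a *: Y) = a * mxdot X Y.
Proof. by rewrite /mxdot -scalemxAr mxtraceZ. Qed.

Lemma mxdotDl m n (X Y Z : 'M[R]_(m, n)) : mxdot (Y + Z) X = mxdot Y X + mxdot Z X.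
Proof. by rewrite mxdotC mxdotDr !(mxdotC X). Qed.

Lemma mxdotNl m n (X Y : 'M[R]_(m, n)) : mxdot (- Y) X = - mxdot Y X.
Proof. by rewrite mxdotC mxdotNr mxdotC. Qed.

Lemma mxdotZl m n (X Y : 'M[R]_(m, n)) a : mxdot (a *: Y) X = a * mxdot Y X.
Proof. by rewrite mxdotC mxdotZr mxdotC. Qed.

Lemma mxdot_mull m n p (X : 'M[R]_(m, p)) (B : 'M[R]_(m, n)) (Y : 'M[R]_(n, p)) :
  mxdot X (B *m Y) = mxdot (B^T *m X) Y.
Proof. by rewrite /mxdot trmx_mul trmxK mulmxA. Qed.

Lemma mxdot_mulr m n p (X : 'M[R]_(m, n)) (Y : 'M[R]_(m, p)) (W : 'M[R]_(p, n)) :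
  mxdot X (Y *m W) = mxdot (X *m W^T) Y.
Proof. by rewrite /mxdot mulmxA mxtrace_mulC trmx_mul trmxK mulmxA. Qed.

Lemma mxdot_ge0 m n (X : 'M[R]_(m, n)) : 0 <= mxdot X X.
Proof. by rewrite mxdotE; do 2![apply: sumr_ge0 => ? _]; rewrite -expr2 sqr_ge0. Qed.

Lemma mxdot_eq0 m n (X : 'M[R]_(m, n)) : mxdot X X = 0 -> X = 0.
Proof.
have sqr_ge0' (x : R) : 0 <= x * x by rewrite -expr2 sqr_ge0.
rewrite mxdotE => X0; apply/matrixP => i j; rewrite mxE.
have colj0 := psumr_eq0P
  (fun j _ => sumr_ge0 _ (fun i _ => sqr_ge0' (X i j))) X0 (i := j) isT.
have /eqP := psumr_eq0P (fun i _ => sqr_ge0' (X i j)) colj0 (i := i) isT.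
by rewrite mulf_eq0 orbb => /eqP.
Qed.

Lemma mxdot_CauchySchwarz m n (X Y : 'M[R]_(m, n)) :
  mxdot X Y ^+ 2 <= mxdot X X * mxdot Y Y.
Proof.
have [->|nzY] := eqVneq Y 0.
  by rewrite /mxdot !(mulmx0, trmx0, mul0mx) linear0 expr0n mulr0.
set a := mxdot X Y; set b := mxdot Y Y; set c := mxdot X X.
have b_gt0 : 0 < b.
  by rewrite lt_def mxdot_ge0 andbT; apply: contraNneq nzY => /mxdot_eq0 ->.
have : 0 <= mxdot (b *: X - a *: Y) (b *: X - a *: Y) by exact: mxdot_ge0.
have -> : mxdot (b *: X - a *: Y) (b *: X - a *: Y) = b * (c * b - a ^+ 2).
  rewrite !(mxdotDr, mxdotDl, mxdotNr, mxdotNl, mxdotZr, mxdotZl) (mxdotC Y X).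
  rewrite -/a -/b -/c; ring.
by rewrite pmulr_rge0 // subr_ge0 mulrC.
Qed.

Lemma mxdot_mul_proj_le m n (X : 'M[R]_(m, n)) (Q : 'M[R]_n) :
  Q^T = Q -> Q *m Q = Q -> mxdot (X *m Q) (X *m Q) <= mxdot X X.
Proof.
move=> QT QQ.
have XQ : mxdot (X *m Q) (X *m Q) = mxdot X (X *m Q).
  by rewrite mxdot_mulr QT -mulmxA QQ mxdotC.
have := mxdot_ge0 (X - X *m Q).
rewrite !(mxdotDr, mxdotDl, mxdotNr, mxdotNl) (mxdotC (X *m Q) X) XQ.
lra.
Qed.

Lemma mulmx_gram0 r s p (K : 'M[R]_(r, s)) (B : 'M[R]_(s, p)) :
  K *m (B *m B^T) = 0 -> K *m B = 0.
Proof.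
move=> KBB0; apply: trmx_inj; rewrite trmx0; apply: mxdot_eq0.
by rewrite /mxdot trmxK trmx_mul mulmxA -(mulmxA K) KBB0 mul0mx linear0.
Qed.

Lemma row_free_gram_unit r p (B : 'M[R]_(r, p)) :
  row_free B -> B *m B^T \in unitmx.
Proof.
move=> freeB; rewrite -row_free_unit -kermx_eq0; apply/eqP.
apply: (row_free_inj freeB); rewrite mul0mx.
exact/mulmx_gram0/mulmx_ker.
Qed.

Definition orthoproj r n (B : 'M[R]_(r, n)) : 'M[R]_n :=
  B^T *m invmx (B *m B^T) *m B.

Section Orthoproj.
Variables (r n : nat) (B : 'M[R]_(r, n)).
Hypothesis freeB : row_free B.
Let gram_unit : B *m B^T \in unitmx := row_free_gram_unit freeB.

Lemma orthoproj_fix m (C : 'M[R]_(m, n)) : (C <= B)%MS -> C *m orthoproj B = C.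
Proof.
case/submxP=> D ->.
by rewrite /orthoproj -!mulmxA (mulmxA B) (mulmxA (B *m B^T)) mulmxV // mul1mx.
Qed.

Lemma orthoproj_sym : (orthoproj B)^T = orthoproj B.
Proof.
by rewrite /orthoproj !trmx_mul trmxK trmx_inv trmx_mul trmxK mulmxA.
Qed.

Lemma orthoproj_idem : orthoproj B *m orthoproj B = orthoproj B.
Proof. exact/orthoproj_fix/submxMl. Qed.

Lemma mxtrace_orthoproj : \tr (orthoproj B) = r%:R.
Proof. by rewrite /orthoproj mxtrace_mulC mulmxA mulmxV // mxtrace1. Qed.

End Orthoproj.

Lemma mxdot_low_rank_split n d (A Ak Z : 'M[R]_(n, d)) :
  exists a b, [/\ mxdot A Z = a + b,
    a ^+ 2 <= (\rank Ak)%:R * mxdot (A^T *m Z) (A^T *m Z) &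
    b ^+ 2 <= mxdot (A - Ak) (A - Ak) * mxdot Z Z].
Proof.
have freeB := row_base_free Ak.
set Pi := orthoproj (row_base Ak); set Q := 1%:M - Pi.
have AkPi : Ak *m Pi = Ak by apply: orthoproj_fix; rewrite ?eq_row_base.
have QT : Q^T = Q by rewrite /Q linearB /= trmx1 orthoproj_sym.
have QQ : Q *m Q = Q.
  by rewrite /Q mulmxBr mulmx1 mulmxBl mul1mx orthoproj_idem // subrr subr0.
have AQ : A *m Q = (A - Ak) *m Q.
  by rewrite mulmxBl [Ak *m Q]mulmxBr mulmx1 AkPi subrr subr0.
exists (mxdot Pi (A^T *m Z)), (mxdot ((A - Ak) *m Q) Z); split.
- have {1}-> : A = A *m Pi + A *m Q by rewrite /Q mulmxBr mulmx1 addrC subrK.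
  by rewrite mxdotDl AQ mxdot_mull trmxK.
- apply: le_trans (mxdot_CauchySchwarz _ _) _.
  apply: ler_wpM2r; first exact: mxdot_ge0.
  by rewrite /mxdot orthoproj_sym orthoproj_idem // mxtrace_orthoproj.
- apply: le_trans (mxdot_CauchySchwarz _ _) _.
  apply: ler_wpM2r; first exact: mxdot_ge0.
  exact: mxdot_mul_proj_le.
Qed.

End FrobeniusDot.

Section RidgeLeverage.
Variable R : rcfType.

Lemma frob2_mxdot m n (X : 'M[R]_(m, n)) : frob2 X = mxdot X X.
Proof.
rewrite mxdotE /frob2 exchange_big.
by apply: eq_bigr => j _; apply: eq_bigr => i _; rewrite expr2.
Qed.

Lemma sum_quad_col n d (A : 'M[R]_(n, d)) (P : 'M[R]_n) :
  \sum_(i < d) quad_col A P i = mxdot A (P *m A).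
Proof.
rewrite /mxdot mulmxA; apply: eq_bigr => i _.
rewrite /quad_col !mxE; apply: eq_bigr => j _; rewrite !mxE; congr (_ * _).
by apply: eq_bigr => l _; rewrite !mxE.
Qed.

Lemma pinv_sym n (M P : 'M[R]_n) : M^T = M -> is_pinv M P -> P^T = P.
Proof.
move=> MT [MPM PMP MPT PMT].
have PTM : P^T *m M = M *m P by rewrite -MPT trmx_mul MT.
have MPT' : M *m P^T = P *m M by rewrite -PMT trmx_mul MT.
have PPM : P *m P *m M = P.
  have P_eq : P = P *m P^T *m M by rewrite -mulmxA PTM mulmxA PMP.
  rewrite [RHS]P_eq -[in RHS]MPM !mulmxA -(mulmxA P P^T M) PTM !mulmxA.
  by rewrite PMP.
have PMPT : P *m M *m P^T = P by rewrite -mulmxA MPT' mulmxA PPM.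
by rewrite -[in LHS]PMPT !trmx_mul trmxK MT mulmxA PMPT.
Qed.

Lemma pinv_shifted_gram_dot n d (A : 'M[R]_(n, d)) (lam : R) (P : 'M[R]_n) :
  is_pinv (A *m A^T + lam%:M) P ->
  mxdot A (P *m A) =
    mxdot (A^T *m (P *m A)) (A^T *m (P *m A)) + lam * mxdot (P *m A) (P *m A).
Proof.
move=> pinvP; have PT : P^T = P.
  by apply: pinv_sym pinvP; rewrite linearD /= trmx_mul trmxK tr_scalar_mx.
case: pinvP => _ PMP _ _.
rewrite -{1}PMP -!mulmxA mxdot_mull PT.
by rewrite mulmxDl mul_scalar_mx mxdotDr mxdotZr -mulmxA mxdot_mull.
Qed.

End RidgeLeverage.

Theorem mainTheorem1 (R : rcfType) (n d k : nat) (A Ak : 'M[R]_(n, d))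
    (P : 'M[R]_n) :
  (0 < k)%N ->
  best_rank_approx k A Ak ->
  is_pinv (ridge_mx k A Ak) P ->
  \sum_(i < d) quad_col A P i <= 2 * k%:R.
Proof.
move=> k_gt0 [rk_Ak _] pinvP.
set lam := frob2 (A - Ak) / k%:R.
have k_lam : k%:R * lam = mxdot (A - Ak) (A - Ak).
  by rewrite mulrC divfK ?frob2_mxdot // pnatr_eq0 -lt0n.
have := pinv_shifted_gram_dot pinvP; rewrite -/lam => dotE.
have [a [b [abE a_le b_le]]] := mxdot_low_rank_split A Ak (P *m A).
rewrite sum_quad_col dotE; apply: (split_sum_le_double (a := a) (b := b)).
- exact: ler0n.
- apply: le_trans a_le _; apply: ler_wpM2r; rewrite ?ler_nat //.
  exact: mxdot_ge0.
- by rewrite mulrA k_lam.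
- by rewrite -dotE.
Qed.
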